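(* Let $d\ge1$ and let $P,Q\subset\mathbb{R}^d$ be finite point sets that are not $(1,\infty)$-separable. Then there exist $P^*\subseteq P$ and $Q^*\subseteq Q$ with $|P^*|+|Q^*|\le 2d+2$ such that $P^*$ and $Q^*$ are not $(1,\infty)$-separable. That is, $(1,\infty)$-separability has the Helly-type property with Helly number at most $2d+2$.
   Context: Finite sets $P,Q\subset\mathbb{R}^d$ are $(1,\infty)$-separable if $\mathrm{CH}(P)\cap Q=\emptyset$ or $P\cap\mathrm{CH}(Q)=\emptyset$, where $\mathrm{CH}$ denotes the convex hull (equivalently: one of the two sets can be covered by a single convex set and the other by arbitrarily many convex sets, with the two unions disjoint). *)

(* Points of R^d are row vectors 'rV[R]_d over an arbitrary
   real field R (the statement is stated for every realFieldType, which
   includes the reals). Finite point sets are finmap {fset _}. *)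
From HB Require Import structures.
From mathcomp Require Import all_boot all_order all_algebra.
From mathcomp Require Import finmap.
Set Implicit Arguments. Unset Strict Implicit. Unset Printing Implicit Defensive.
Import Order.TTheory GRing.Theory Num.Theory.
Local Open Scope ring_scope.
Local Open Scope fset_scope.

Definition in_conv_hull (R : realFieldType) (d : nat)
  (P : {fset 'rV[R]_d}) (x : 'rV[R]_d) : Prop :=
  exists w : 'rV[R]_d -> R,
    (forall p, p \in P -> 0 <= w p) /\
    \sum_(p <- P) w p = 1 /\
    x = \sum_(p <- P) w p *: p.

Definition sep_1_inf (R : realFieldType) (d : nat)
  (P Q : {fset 'rV[R]_d}) : Prop :=
  (forall q, q \in Q -> ~ in_conv_hull P q) \/
  (forall p, p \in P -> ~ in_conv_hull Q p).

From HB Require Import structures.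
From mathcomp Require Import all_boot all_order all_algebra.
From mathcomp Require Import finmap.
From mathcomp Require Import zify.
From Stdlib Require Classical.
Set Implicit Arguments. Unset Strict Implicit. Unset Printing Implicit Defensive.
Import Order.TTheory GRing.Theory Num.Theory.
Local Open Scope fset_scope.
Local Open Scope ring_scope.

(* If P and Q are not (1,oo)-separable, there are q ∈ Q ∩ CH(P) and
   p ∈ P ∩ CH(Q).  The theorem then follows from a Carathéodory theorem
   with a prescribed point: if q ∈ CH(P) and p ∈ P, then q ∈ CH(P') for
   some P' ⊆ P of size at most d+1 that still contains p.  Taking such
   P' for (q, p) and Q' for (p, q) gives |P'| + |Q'| <= 2d+2, and the
   witnesses q ∈ Q' ∩ CH(P'), p ∈ P' ∩ CH(Q') show non-separability. *)

(* More than d vectors of F^d, indexed by a finite set S, are linearly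
   dependent: the matrix whose rows are the f x has a nonzero left kernel,
   whose entries are then gathered by the element they index. *)
Lemma lin_dep (F : fieldType) (T : choiceType) (d : nat)
    (f : T -> 'rV[F]_d) (S : {fset T}) :
  (d < #|` S|)%N -> exists b : T -> F,
    \sum_(x <- S) b x *: f x = 0 /\ exists2 x, x \in S & b x != 0.
Proof.
move=> card_S; have /fset0Pn[x0 _] : S != fset0.
  by rewrite -cardfs_gt0 (leq_ltn_trans _ card_S).
set s := (S : seq T); have us : uniq s := fset_uniq S.
pose n := size s.
pose A := \matrix_(i < n, j < d) f (nth x0 s i) 0 j.
have /matrix0Pn[i [j v_nz]] : kermx A != 0.
  rewrite kermx_eq0; apply: contraTN card_S => /eqP free_A.
  by rewrite -leqNgt -[X in (X <= _)%N]free_A rank_leq_col.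
pose v := row i (kermx A).
have vA : v *m A = 0 by rewrite -row_mul mulmx_ker row0.
(* the positions of s are distinct, so gathering by element loses nothing *)
have coef (k : 'I_n) : \sum_(k' < n | nth x0 s k' == nth x0 s k) v 0 k' = v 0 k.
  by rewrite (big_pred1 k) // => k' /=; rewrite nth_uniq.
exists (fun x => \sum_(k < n | nth x0 s k == x) v 0 k); split.
  rewrite (big_nth x0) big_mkord -/n -[RHS]vA mulmx_sum_row.
  apply: eq_bigr => k _; rewrite coef; congr (_ *: _).
  by apply/rowP => l; rewrite !mxE.
by exists (nth x0 s j); [exact: mem_nth | rewrite coef mxE].
Qed.

Lemma pos_term_of_pos_sum (R : realDomainType) (T : eqType) (s : seq T)
    (b : T -> R) :
  0 < \sum_(x <- s) b x -> exists2 x, x \in s & 0 < b x.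
Proof.
move=> sum_pos; apply/hasP; apply: contraTT sum_pos => /hasPn nonpos.
by rewrite -leNgt big_seq sumr_le0 // => x /nonpos; rewrite -leNgt.
Qed.

Lemma lin_dep_pos (R : realFieldType) (T : choiceType) (d : nat)
    (f : T -> 'rV[R]_d) (S : {fset T}) :
  (d < #|` S|)%N -> exists b : T -> R,
    [/\ \sum_(x <- S) b x *: f x = 0, 0 <= \sum_(x <- S) b x
      & exists2 x, x \in S & 0 < b x].
Proof.
move=> /(lin_dep f)[b [rel_b [x1 x1S bx1]]].
have rel_opp : \sum_(x <- S) (- b x) *: f x = 0.
  by rewrite (eq_bigr _ (fun x _ => scaleNr _ _)) sumrN rel_b oppr0.
have sum_opp : \sum_(x <- S) - b x = - \sum_(x <- S) b x by rewrite sumrN.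
case: (ltgtP (\sum_(x <- S) b x) 0) => [sum_neg | sum_pos | sum0].
- exists (fun x => - b x); split; rewrite ?sum_opp ?oppr_ge0 ?ltW //.
  by apply: pos_term_of_pos_sum; rewrite sum_opp oppr_gt0.
- by exists b; split; rewrite ?ltW //; apply: pos_term_of_pos_sum.
- case: (ltgtP (b x1) 0) => [bx1_neg | bx1_pos | bx1_0].
  + exists (fun x => - b x); split; rewrite ?sum_opp ?sum0 ?oppr0 //.
    by exists x1; rewrite ?oppr_gt0.
  + by exists b; split; rewrite ?sum0 //; exists x1.
  + by move: bx1; rewrite bx1_0 eqxx.
Qed.

(* It comes from a normalised linear
   relation among the vectors x - p, x ∈ P \ {p}. *)
Lemma affine_dep_avoiding (R : realFieldType) (d : nat)
    (P : {fset 'rV[R]_d}) (p : 'rV[R]_d) :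
  p \in P -> (d.+1 < #|` P|)%N -> exists c : 'rV[R]_d -> R,
    [/\ \sum_(x <- P) c x = 0, \sum_(x <- P) c x *: x = 0, c p <= 0
      & exists2 x, x \in P & 0 < c x].
Proof.
move=> pP P_big; have cardS : (d < #|` P `\ p|)%N.
  by move: P_big; rewrite (cardfsD1 p) pP.
have [b [rel_b sum_b [x1 x1S bx1]]] := lin_dep_pos (fun x => x - p) cardS.
set B := \sum_(x <- P `\ p) b x in sum_b.
pose c x := if x == p then - B else b x.
have c_off x : x \in P `\ p -> c x = b x.
  by case/fsetD1P => /negbTE xp _; rewrite /c xp.
have comb_b : \sum_(x <- P `\ p) b x *: x = B *: p.
  apply: subr0_eq; rewrite -[RHS]rel_b.
  by rewrite (eq_bigr _ (fun x _ => scalerBr _ _ _)) sumrB -scaler_suml.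
exists c; split.
- by rewrite (big_fsetD1 p) //= {1}/c eqxx (eq_big_seq _ c_off) addNr.
- rewrite (big_fsetD1 p) //= {1}/c eqxx.
  rewrite (eq_big_seq (fun x => b x *: x)) ?comb_b ?scaleNr ?addNr //.
  by move=> x /c_off ->.
- by rewrite /c eqxx oppr_le0.
- by exists x1; [case/fsetD1P: x1S | rewrite c_off].
Qed.

Lemma seq_argmin (R : realDomainType) (T : eqType) (s : seq T) (a : pred T)
    (g : T -> R) :
  has a s -> exists x, [/\ x \in s, a x & forall y, y \in s -> a y -> g x <= g y].
Proof.
elim: s => [//|z s IH] /=.
case: (boolP (has a s)) => [/IH[x [xs ax min_x]] _ | no_a az]; last first.
  rewrite orbF in az; exists z; split; rewrite ?mem_head // => y.
  rewrite inE => /predU1P[-> //|ys ay].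
  by move/hasPn: no_a => /(_ y ys); rewrite ay.
have [/andP[az /ltW le_zx] | not_lt_zx] := boolP (a z && (g z < g x)).
  exists z; split; rewrite ?mem_head // => y.
  rewrite inE => /predU1P[-> //|ys ay].
  exact: le_trans le_zx (min_x y ys ay).
exists x; split; rewrite ?inE ?xs ?orbT // => y.
rewrite inE => /predU1P[-> az|]; last exact: min_x.
by move: not_lt_zx; rewrite az /= -leNgt.
Qed.

Lemma in_conv_hull_fsetD1 (R : realFieldType) (d : nat)
    (P : {fset 'rV[R]_d}) (x0 q : 'rV[R]_d) (w : 'rV[R]_d -> R) :
  x0 \in P -> w x0 = 0 -> (forall x, x \in P -> 0 <= w x) ->
  \sum_(x <- P) w x = 1 -> q = \sum_(x <- P) w x *: x ->
  in_conv_hull (P `\ x0) q.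
Proof.
move=> x0P w0 w_ge0 sum_w ->; exists w; split; [|split].
- by move=> x /fsetD1P[_ /w_ge0].
- by rewrite -sum_w [RHS](big_fsetD1 x0) //= w0 add0r.
- by rewrite (big_fsetD1 x0 (A := P)) //= w0 scale0r add0r.
Qed.

(* The Carathéodory reduction step: moving the weights of a convex
   combination for q along an affine dependence c, as far as they stay
   nonnegative, makes some weight vanish.  Since c p <= 0, the vanishing
   point is not p. *)
Lemma conv_hull_drop (R : realFieldType) (d : nat) (P : {fset 'rV[R]_d})
    (p q : 'rV[R]_d) (c : 'rV[R]_d -> R) :
  in_conv_hull P q ->
  \sum_(x <- P) c x = 0 -> \sum_(x <- P) c x *: x = 0 -> c p <= 0 ->
  (exists2 x, x \in P & 0 < c x) ->
  exists x0, [/\ x0 \in P, x0 != p & in_conv_hull (P `\ x0) q].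
Proof.
move=> [w [w_ge0 [sum_w ->]]] sum_c comb_c cp_le0 [x1 x1P cx1].
have has_pos : has (fun x => 0 < c x) P by apply/hasP; exists x1.
have [x0 [x0P cx0 min_x0]] := seq_argmin (fun x => w x / c x) has_pos.
(* the largest step keeping all weights nonnegative *)
pose t := w x0 / c x0.
have t_ge0 : 0 <= t by rewrite divr_ge0 ?w_ge0 ?ltW.
pose w' x := w x - t * c x.
exists x0; split => //; first by apply: contraTneq cx0 => ->; rewrite -leNgt.
apply: (in_conv_hull_fsetD1 (w := w')) => //.
- by rewrite /w' divfK ?subrr // gt_eqF.
- move=> x xP; rewrite subr_ge0; case: (ltP 0 (c x)) => [cx_pos | cx_le0].
    by rewrite -ler_pdivlMr //; apply: min_x0.
  exact: le_trans (mulr_ge0_le0 t_ge0 cx_le0) (w_ge0 x xP).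
- by rewrite sumrB -mulr_sumr sum_c mulr0 subr0.
- rewrite (eq_bigr _ (fun x _ => scalerBl _ _ _)) sumrB.
  rewrite (eq_bigr _ (fun x _ => esym (scalerA _ _ _))) -scaler_sumr.
  by rewrite comb_c scaler0 subr0.
Qed.

Lemma caratheodory_with_point (R : realFieldType) (d : nat)
    (P : {fset 'rV[R]_d}) (p q : 'rV[R]_d) :
  p \in P -> in_conv_hull P q ->
  exists P', [/\ P' `<=` P, p \in P', (#|` P'| <= d.+1)%N & in_conv_hull P' q].
Proof.
have [n P_small] : exists n, (#|` P| <= n)%N by exists #|` P|.
elim: n P P_small => [|n IH] P P_small pP qP.
  by exists P; split; rewrite ?(leq_trans P_small).
have [P_le | P_big] := leqP #|` P| d.+1; first by exists P.
have [c [sum_c comb_c cp_le0 c_pos]] := affine_dep_avoiding pP P_big.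
have [x0 [x0P x0p qP0]] := conv_hull_drop qP sum_c comb_c cp_le0 c_pos.
have pP0 : p \in P `\ x0 by apply/fsetD1P; rewrite eq_sym.
have P0_small : (#|` P `\ x0| <= n)%N.
  by move: P_small; rewrite (cardfsD1 x0) x0P.
have [P' [sub_P' pP' card_P' qP']] := IH _ P0_small pP0 qP0.
by exists P'; split => //; apply: fsubset_trans sub_P' (fsubsetDl _ _).
Qed.

Theorem mainTheorem8 (R : realFieldType) (d : nat) (hd : (1 <= d)%N)
  (P Q : {fset 'rV[R]_d}) :
  ~ sep_1_inf P Q ->
  exists P' Q' : {fset 'rV[R]_d},
    P' `<=` P /\ Q' `<=` Q /\
    (#|` P'| + #|` Q'| <= 2 * d + 2)%N /\
    ~ sep_1_inf P' Q'.
Proof.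
move=> not_sep.
have [q qQ qP] : exists2 q, q \in Q & in_conv_hull P q.
  apply: Classical_Prop.NNPP => no_witness; apply: not_sep; left => q qQ qP.
  by apply: no_witness; exists q.
have [p pP pQ] : exists2 p, p \in P & in_conv_hull Q p.
  apply: Classical_Prop.NNPP => no_witness; apply: not_sep; right => p pP pQ.
  by apply: no_witness; exists p.
have [P' [sub_P pP' card_P qP']] := caratheodory_with_point pP qP.
have [Q' [sub_Q qQ' card_Q pQ']] := caratheodory_with_point qQ pQ.
exists P', Q'; split; [|split; [|split]] => //; first by lia.
by case=> [sepQ | sepP]; [apply: (sepQ q) | apply: (sepP p)].
Qed.
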